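(* Let $\lambda\in\mathbb{R}$, let $n$ be a positive integer and let $k$ be a positive integer. Then \[ S_{k,\lambda}(n)=\frac{(n+1)_{k+1,\lambda}-(1)_{k+1,\lambda}}{k+1}-\frac{1}{k+1}\sum_{r=0}^{k-1}\binom{k+1}{r}(1)_{k+1-r,\lambda}\,S_{r,\lambda}(n). \]
   Context: For $\lambda\in\mathbb{R}$ the degenerate falling factorials are $(x)_{0,\lambda}=1$ and $(x)_{m,\lambda}=x(x-\lambda)(x-2\lambda)\cdots(x-(m-1)\lambda)$ for $m\ge 1$. For a nonnegative integer $r$ and positive integer $n$, $S_{r,\lambda}(n)=\sum_{j=1}^{n}(j)_{r,\lambda}=(1)_{r,\lambda}+(2)_{r,\lambda}+\cdots+(n)_{r,\lambda}$ (so in particular $S_{0,\lambda}(n)=n$). *)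

From mathcomp Require Import all_boot all_order all_algebra.
Set Implicit Arguments. Unset Strict Implicit. Unset Printing Implicit Defensive.
Import Order.TTheory GRing.Theory Num.Theory.
Local Open Scope ring_scope.

Definition dff {R : pzRingType} (lambda x : R) (m : nat) : R :=
  \prod_(i < m) (x - i%:R * lambda).

Definition Sdeg {R : pzRingType} (lambda : R) (r n : nat) : R :=
  \sum_(1 <= j < n.+1) dff lambda j%:R r.

(** Expanding [(j + 1)_{k+1,λ}] by the degenerate binomial theorem gives
    [(j + 1)_{k+1,λ} - (j)_{k+1,λ} = Σ_{r ≤ k} C(k+1, r) (1)_{k+1-r,λ} (j)_{r,λ}];
    summing over [1 ≤ j ≤ n] telescopes the left side to
    [(n + 1)_{k+1,λ} - (1)_{k+1,λ}], and the [r = k] term on the right is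
    [(k + 1) S_{k,λ}(n)]. *)

From mathcomp Require Import all_boot all_order all_algebra.
From mathcomp Require Import ring.
Import Order.TTheory GRing.Theory Num.Theory.
Local Open Scope ring_scope.

Section DegenerateFallingFactorial.

Variables (R : comPzRingType) (l : R).

Lemma dff0 (x : R) : dff l x 0 = 1.
Proof. by rewrite /dff big_ord0. Qed.

Lemma dffS (x : R) m : dff l x m.+1 = dff l x m * (x - m%:R * l).
Proof. by rewrite /dff big_ord_recr. Qed.

Lemma dff1 (x : R) : dff l x 1 = x.
Proof. by rewrite dffS dff0 mul0r subr0 mul1r. Qed.

Lemma dffD (x y : R) m :
  dff l (x + y) m = \sum_(i < m.+1) 'C(m, i)%:R * dff l x i * dff l y (m - i).
Proof.
elim: m => [|m IHm]; first by rewrite big_ord1 !dff0 bin0 !mulr1.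
(* [x + y - mλ = (x - iλ) + (y - (m - i)λ)] raises one factor or the other *)
have split_factor (i : 'I_m.+1) :
    'C(m, i)%:R * dff l x i * dff l y (m - i) * (x + y - m%:R * l) =
    'C(m, i)%:R * dff l x i.+1 * dff l y (m - i)
    + 'C(m, i)%:R * dff l x i * dff l y (m.+1 - i).
  have le_im : (i <= m)%N by rewrite -ltnS.
  by rewrite subSn // !dffS natrB //; ring.
rewrite dffS IHm big_distrl (eq_bigr _ (fun i _ => split_factor i)) big_split /=.
rewrite [RHS]big_ord_recl [X in _ = _ + X](eq_bigr
  (fun i : 'I_m.+1 => 'C(m, i.+1)%:R * dff l x i.+1 * dff l y (m - i)
                      + 'C(m, i)%:R * dff l x i.+1 * dff l y (m - i))); last first.
  by move=> i _; rewrite binS natrD subSS; ring.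
rewrite big_split /= [X in _ = _ + (X + _)]big_ord_recr /= (bin_small (ltnSn m)).
rewrite !mul0r addr0 [X in _ + X = _]big_ord_recl /= !bin0 !subn0 !dff0 /bump /=.
under [X in _ + (_ + X) = _]eq_bigr => i _ do rewrite add1n subSS.
by rewrite addrCA [_ + \sum_(i < m.+1) _]addrC.
Qed.

Lemma dff_add1_sub (x : R) m :
  dff l (x + 1) m - dff l x m =
  \sum_(r < m) 'C(m, r)%:R * dff l 1 (m - r) * dff l x r.
Proof.
rewrite dffD big_ord_recr /= binn subnn dff0 mul1r mulr1 addrK.
by apply: eq_bigr => r _; rewrite mulrAC.
Qed.

Lemma Sdeg_binomial_sum m n :
  \sum_(r < m) 'C(m, r)%:R * dff l 1 (m - r) * Sdeg l r n =
  dff l n.+1%:R m - dff l 1 m.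
Proof.
under eq_bigr => r _ do rewrite /Sdeg mulr_sumr.
rewrite exchange_big /=.
apply: (telescope_sumr_eq (fun j => dff l j%:R m)) => // j _.
by rewrite -natr1 dff_add1_sub.
Qed.

End DegenerateFallingFactorial.

Theorem theorem2p3 (R : realFieldType) (lambda : R) (n k : nat)
  (hn : (0 < n)%N) (hk : (0 < k)%N) :
  Sdeg lambda k n =
    (dff lambda (n.+1)%:R k.+1 - dff lambda 1 k.+1) / (k.+1)%:R
    - (k.+1)%:R^-1 *
      \sum_(0 <= r < k) ('C(k.+1, r))%:R * dff lambda 1 (k.+1 - r) * Sdeg lambda r n.
Proof.
rewrite big_mkord -(Sdeg_binomial_sum _ lambda k.+1 n).
rewrite big_ord_recr /= subSn // subnn binSn dff1 mulr1.
by field; rewrite addrC natr1 pnatr_eq0.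
Qed.
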